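(* Let $T, N$ be positive integers and $\delta>0$. Let $L\in\mathbb{R}^{T\times T}$ be the lower triangular matrix with $L_{jk}=\delta$ for $k\le j$ and $L_{jk}=0$ for $k>j$, and let $H := (L,\,-L,\,I_T,\,-I_T)\in\mathbb{R}^{4T\times T}$ (vertical stacking). For $i=1,\dots,N$ let $h_i := (\overline{x}_i,\,-\underline{x}_i,\,\overline{u}_i,\,-\underline{u}_i)\in\mathbb{R}^{4T}$ for given vectors $\overline{x}_i,\underline{x}_i,\overline{u}_i,\underline{u}_i\in\mathbb{R}^T$, and suppose each set $\mathbb{U}_i := \{u\in\mathbb{R}^T \mid Hu\le h_i\}$ is nonempty. Let $h_0 := \frac{1}{N}\sum_{i=1}^N h_i$, $\mathbb{U}_0 := \{u\in\mathbb{R}^T\mid Hu\le h_0\}$, and $\mathbb{U} := \mathbb{U}_1+\dots+\mathbb{U}_N = \{\sum_{i=1}^N u_i \mid u_i\in\mathbb{U}_i\}$ (Minkowski sum). Let $\overline{p}\in\mathbb{R}^T$ and $P\in\mathbb{R}^{T\times T}$. If there exist $\gamma_i\in\mathbb{R}^T$, $\Gamma_i\in\mathbb{R}^{T\times T}$ and $\Lambda_i\in\mathbb{R}^{4T\times 4T}$ for $i=1,\dots,N$ such that $[\,\overline{p},\,P\,] = \sum_{i=1}^N [\,\gamma_i,\,\Gamma_i\,]$ (i.e. $\overline{p}=\sum_i\gamma_i$ and $P=\sum_i\Gamma_i$), and for each $i=1,\dots,N$: $\Lambda_i\ge 0$ (entrywise), $\Lambda_i H = H\Gamma_i$, and $\Lambda_i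 h_0 \le h_i - H\gamma_i$ (entrywise), then $\overline{p}+P\mathbb{U}_0 \subseteq \mathbb{U}$.
   Context: For a vector $\gamma$ and matrix $\Gamma$, $\gamma+\Gamma\mathbb{X} := \{\gamma+\Gamma x\mid x\in\mathbb{X}\}$. Vector and matrix inequalities are entrywise. $(A,B)$ denotes vertical stacking of $A$ and $B$; $[\,a,\,B\,]$ denotes horizontal concatenation of a column $a$ and matrix $B$. *)

From HB Require Import structures.
From mathcomp Require Import all_boot all_order all_algebra.
Set Implicit Arguments. Unset Strict Implicit. Unset Printing Implicit Defensive.
Import Order.TTheory GRing.Theory Num.Theory.
Local Open Scope ring_scope.

Definition mx_le (R : numDomainType) (m n : nat) (A B : 'M[R]_(m, n)) : Prop :=
  forall i j, A i j <= B i j.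

Definition Lmx (R : ringType) (T : nat) (delta : R) : 'M[R]_T :=
  \matrix_(j < T, k < T) (if (k <= j)%N then delta else 0).

Definition Hmx (R : ringType) (T : nat) (delta : R) : 'M[R]_((T + T) + (T + T), T) :=
  col_mx (col_mx (Lmx T delta) (- Lmx T delta)) (col_mx 1%:M (- 1%:M)).

Definition hvec (R : ringType) (T : nat) (xb xl ub ul : 'cV[R]_T)
  : 'cV[R]_((T + T) + (T + T)) :=
  col_mx (col_mx xb (- xl)) (col_mx ub (- ul)).

Definition polyU (R : numDomainType) (T : nat) (H : 'M[R]_((T + T) + (T + T), T))
  (h : 'cV[R]_((T + T) + (T + T))) (u : 'cV[R]_T) : Prop :=
  mx_le (H *m u) h.

From HB Require Import structures.
From mathcomp Require Import all_boot all_order all_algebra.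
Import Order.TTheory GRing.Theory Num.Theory.
Set Implicit Arguments. Unset Strict Implicit. Unset Printing Implicit Defensive.
Local Open Scope ring_scope.

(* Each summand u_i := gamma_i + Gamma_i x of pbar + P x lies in U_i: from
   Lambda_i H = H Gamma_i we get H u_i = H gamma_i + Lambda_i (H x), and a
   nonnegative Lambda_i turns H x <= h_0 into Lambda_i (H x) <= Lambda_i h_0
   <= h_i - H gamma_i.  Nothing about the shape of H, delta > 0 or the
   nonemptiness of the U_i is needed. *)

Lemma mx_le_mul2l (R : numDomainType) (m n p : nat) (A : 'M[R]_(m, n))
    (B C : 'M[R]_(n, p)) :
  mx_le 0 A -> mx_le B C -> mx_le (A *m B) (A *m C).
Proof.
move=> A_ge0 leBC i j; rewrite !mxE; apply: ler_sum => k _.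
by apply: ler_wpM2l; [have := A_ge0 i k; rewrite mxE | exact: leBC].
Qed.

Lemma mx_le_affine_image (R : numDomainType) (m n : nat) (H : 'M[R]_(m, n))
    (h0 h : 'cV[R]_m) (gamma : 'cV[R]_n) (Gamma : 'M[R]_n)
    (Lambda : 'M[R]_m) (x : 'cV[R]_n) :
  mx_le 0 Lambda -> Lambda *m H = H *m Gamma ->
  mx_le (Lambda *m h0) (h - H *m gamma) ->
  mx_le (H *m x) h0 -> mx_le (H *m (gamma + Gamma *m x)) h.
Proof.
move=> Lambda_ge0 LambdaH le_h0 le_Hx i j.
have -> : H *m (gamma + Gamma *m x) = H *m gamma + Lambda *m (H *m x).
  by rewrite mulmxDr !mulmxA LambdaH.
have := le_h0 i j; have := mx_le_mul2l Lambda_ge0 le_Hx i j.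
rewrite !mxE lerBrDl => le_LHx; apply: le_trans; by rewrite lerD2l.
Qed.

Theorem theorem1 (R : realFieldType) (T N : nat) (delta : R)
  (hT : (0 < T)%N) (hN : (0 < N)%N) (hdelta : 0 < delta)
  (xb xl ub ul : 'I_N -> 'cV[R]_T)
  (hne : forall i, exists u, polyU (Hmx T delta) (hvec (xb i) (xl i) (ub i) (ul i)) u)
  (pbar : 'cV[R]_T) (P : 'M[R]_T)
  (gamma : 'I_N -> 'cV[R]_T) (Gamma : 'I_N -> 'M[R]_T)
  (Lambda : 'I_N -> 'M[R]_((T + T) + (T + T)))
  (hp : pbar = \sum_(i < N) gamma i)
  (hP : P = \sum_(i < N) Gamma i)
  (hLpos : forall i, mx_le 0 (Lambda i))
  (hLH : forall i, Lambda i *m Hmx T delta = Hmx T delta *m Gamma i)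
  (hLh : forall i,
     mx_le (Lambda i *m ((N%:R)^-1 *: \sum_(k < N) hvec (xb k) (xl k) (ub k) (ul k)))
           (hvec (xb i) (xl i) (ub i) (ul i) - Hmx T delta *m gamma i)) :
  forall x : 'cV[R]_T,
    polyU (Hmx T delta) ((N%:R)^-1 *: \sum_(k < N) hvec (xb k) (xl k) (ub k) (ul k)) x ->
    exists u : 'I_N -> 'cV[R]_T,
      (forall i, polyU (Hmx T delta) (hvec (xb i) (xl i) (ub i) (ul i)) (u i)) /\
      pbar + P *m x = \sum_(i < N) u i.
Proof.
move=> x x_in_U0; exists (fun i => gamma i + Gamma i *m x); split.
- by move=> i; apply: mx_le_affine_image (hLpos i) (hLH i) (hLh i) x_in_U0.
- by rewrite hp hP big_split /= mulmx_suml.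
Qed.
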